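(* Assume $N\ge n$. For every matrix $U\in\mathbb{R}^{n\times N}$ with $UU^T=I_n$, the coefficient matrix $$F=\begin{bmatrix}\mathbb{E}[f(\Delta)] & L\,U\,W_1^{-1/2}\end{bmatrix}\in\mathbb{R}^{n\times(N+1)}$$ yields a PC approximation $\hat f(\Delta)=F\Phi(\Delta)$ with exact first and second moments, i.e. $$\mathbb{E}[\hat f(\Delta)]=\mathbb{E}[f(\Delta)],\qquad \mathbb{E}[\hat f(\Delta)\hat f(\Delta)^T]=F W F^T=\mathbb{E}[f(\Delta)f(\Delta)^T].$$ Conversely, every $F\in\mathbb{R}^{n\times(N+1)}$ satisfying these two moment equalities is of this form for some $U\in\mathbb{R}^{n\times N}$ with $UU^T=I_n$.
   Context: Let $\Delta$ be a random vector taking values in $D\subseteq\mathbb{R}^d$ with probability density $p$, and $\mathbb{E}[g(\Delta)]=\int_D g(\Delta)p(\Delta)\,d\Delta$. Let $f:D\to\mathbb{R}^n$ have square-integrable components. Let $\phi_0\equiv 1,\phi_1,\dots,\phi_N$ be polynomials on $D$, orthogonal with respect to $p$: $\mathbb{E}[\phi_i(\Delta)\phi_j(\Delta)]=0$ for $i\neq j$, with $\mathbb{E}[\phi_i(\Delta)^2]>0$ for all $i$. Set $\Phi(\Delta)=[\phi_0(\Delta),\dots,\phi_N(\Delta)]^T$ (so $\mathbb{E}[\Phi(\Delta)]=[1,0,\dots,0]^T$), $W=\mathbb{E}[\Phi\Phi^T]=\mathrm{diag}(\mathbb{E}[\phi_0^2],\dots,\mathbb{E}[\phi_N^2])$, and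 $W_1=\mathrm{diag}(\mathbb{E}[\phi_1^2],\dots,\mathbb{E}[\phi_N^2])$. A PC approximation of $f$ with coefficient matrix $F\in\mathbb{R}^{n\times(N+1)}$ is $\hat f(\Delta)=F\Phi(\Delta)$. Let $L\in\mathbb{R}^{n\times n}$ be any matrix (e.g. a Cholesky factor) with $LL^T=\mathbb{E}[f f^T]-\mathbb{E}[f]\mathbb{E}[f]^T$ (the covariance of $f(\Delta)$). *)

From HB Require Import structures.
From mathcomp Require Import all_boot all_order all_algebra.
Set Implicit Arguments. Unset Strict Implicit. Unset Printing Implicit Defensive.
Import Order.TTheory GRing.Theory Num.Theory.
Local Open Scope ring_scope.

Definition Emx (R : rcfType) (T : Type) (E : (T -> R) -> R) (a b : nat)
  (M : T -> 'M[R]_(a, b)) : 'M[R]_(a, b) :=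
  \matrix_(i, j) E (fun x => M x i j).

Definition PhiV (R : rcfType) (T : Type) (N : nat) (phi : 'I_N.+1 -> T -> R)
  (x : T) : 'cV[R]_N.+1 := \col_i phi i x.

Definition fV (R : rcfType) (T : Type) (n : nat) (f : 'I_n -> T -> R)
  (x : T) : 'cV[R]_n := \col_i f i x.

Definition Wmx (R : rcfType) (T : Type) (E : (T -> R) -> R) (N : nat)
  (phi : 'I_N.+1 -> T -> R) : 'M[R]_N.+1 :=
  Emx E (fun x => PhiV phi x *m (PhiV phi x)^T).

Definition W1isqrt (R : rcfType) (T : Type) (E : (T -> R) -> R) (N : nat)
  (phi : 'I_N.+1 -> T -> R) : 'M[R]_N :=
  diag_mx (\row_(i < N) (Num.sqrt (E (fun x => phi (lift ord0 i) x ^+ 2)))^-1).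

Definition PCcoef (R : rcfType) (n N : nat) (Ef : 'cV[R]_n) (L : 'M[R]_n)
  (U : 'M[R]_(n, N)) (W1is : 'M[R]_N) : 'M[R]_(n, N.+1) :=
  row_mx Ef (L *m U *m W1is).

(* Since E[Phi] = e_0 and W = diag(1, W_1), a coefficient matrix F = [a X] has
   mean a and second moment a a^T + X W_1 X^T.  The moment conditions are thus
   a = E[f] and (X W_1^(1/2)) (X W_1^(1/2))^T = L L^T.  Two n x N matrices with
   the same Gram matrix differ by a right orthogonal factor (build it one row at
   a time with Householder reflections); applied to X W_1^(1/2) and
   L [I_n 0] this yields U = [I_n 0] Q with U U^T = I_n and X = L U W_1^(-1/2). *)

From HB Require Import structures.
From mathcomp Require Import all_boot all_order all_algebra.
From mathcomp Require Import ring.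
From Stdlib Require Import FunctionalExtensionality.
Set Implicit Arguments. Unset Strict Implicit. Unset Printing Implicit Defensive.
Import Order.TTheory GRing.Theory Num.Theory.
Local Open Scope ring_scope.

Section Reflection.
Variable R : realFieldType.

Definition dot n (u v : 'rV[R]_n) : R := (u *m v^T) 0 0.

Lemma dot_row m p n (A : 'M[R]_(m, n)) (B : 'M[R]_(p, n)) i j :
  (A *m B^T) i j = dot (row i A) (row j B).
Proof. by rewrite /dot !mxE; apply: eq_bigr => k _; rewrite !mxE. Qed.

Lemma dotC n (u v : 'rV[R]_n) : dot u v = dot v u.
Proof. by rewrite /dot !mxE; apply: eq_bigr => k _; rewrite !mxE mulrC. Qed.

Lemma dotBl n (u v z : 'rV[R]_n) : dot (u - v) z = dot u z - dot v z.
Proof. by rewrite /dot mulmxBl !mxE. Qed.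

Lemma dotBr n (u v z : 'rV[R]_n) : dot z (u - v) = dot z u - dot z v.
Proof. by rewrite dotC dotBl !(dotC z). Qed.

Lemma dot_scalar n (u v : 'rV[R]_n) : u *m v^T = (dot u v)%:M.
Proof. exact: mx11_scalar. Qed.

Lemma dot_self_eq0 n (u : 'rV[R]_n) : (dot u u == 0) = (u == 0).
Proof.
apply/idP/eqP => [|->]; last by rewrite /dot mul0mx mxE.
rewrite /dot mxE psumr_eq0 => [/allP u0|j _]; last by rewrite !mxE -expr2 sqr_ge0.
apply/rowP => j; rewrite mxE.
by have /implyP/(_ isT) := u0 j (mem_index_enum j); rewrite !mxE mulf_eq0 orbb => /eqP.
Qed.

(* For w = 0 the junk value 2 / 0 = 0 makes reflectmx w the identity, so the
   lemmas below need no nondegeneracy hypothesis. *)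
Definition reflectmx n (w : 'rV[R]_n) : 'M[R]_n :=
  1%:M - (2 / dot w w) *: (w^T *m w).

Section ReflectmxTheory.
Variables (n : nat) (w : 'rV[R]_n).
Local Notation H := (reflectmx w).

Lemma reflectmxE (u : 'rV[R]_n) : u *m H = u - (2 * dot u w / dot w w) *: w.
Proof.
rewrite /reflectmx mulmxBr mulmx1 -scalemxAr mulmxA dot_scalar mul_scalar_mx.
by rewrite scalerA mulrAC mulrC.
Qed.

Lemma tr_reflectmx : H^T = H.
Proof. by rewrite /reflectmx linearB /= linearZ /= trmx_mul trmxK trmx1. Qed.

Lemma reflectmx_self : w *m H = - w.
Proof.
have [->|w0] := eqVneq w 0; first by rewrite mul0mx oppr0.
rewrite reflectmxE mulfK ?dot_self_eq0 //.
by rewrite scaler_nat mulr2n opprD addrA subrr sub0r.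
Qed.

Lemma reflectmxK (u : 'rV[R]_n) : u *m H *m H = u.
Proof.
by rewrite [u *m H]reflectmxE mulmxBl -scalemxAl reflectmx_self reflectmxE scalerN opprK subrK.
Qed.

Lemma reflectmx_orth : H *m H^T = 1%:M.
Proof.
by apply/row_matrixP => i; rewrite tr_reflectmx -{1}[H]mul1mx !row_mul reflectmxK.
Qed.

Lemma reflectmx_fix (u : 'rV[R]_n) : dot u w = 0 -> u *m H = u.
Proof. by move=> uw0; rewrite reflectmxE uw0 mulr0 mul0r scale0r subr0. Qed.

End ReflectmxTheory.

Lemma reflectmx_swap n (a b : 'rV[R]_n) :
  dot a a = dot b b -> b *m reflectmx (a - b) = a.
Proof.
move=> ab; have [/subr0_eq ->|w0] := eqVneq (a - b) 0.
  by rewrite subrr reflectmx_fix // /dot trmx0 mulmx0 mxE.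
have ww : dot (a - b) (a - b) = - 2 * dot b (a - b).
  by rewrite !dotBl !dotBr ab (dotC a b); ring.
have bw0 : dot b (a - b) != 0.
  by apply: contraNneq w0 => bw; rewrite -dot_self_eq0 ww bw mulr0.
rewrite reflectmxE.
have -> : 2 * dot b (a - b) / dot (a - b) (a - b) = -1 by rewrite ww; field.
by rewrite scaleN1r opprK addrC subrK.
Qed.

Lemma gram_mulmx_orth m n p (A : 'M[R]_(m, n)) (Q : 'M[R]_(n, p)) :
  Q *m Q^T = 1%:M -> (A *m Q) *m (A *m Q)^T = A *m A^T.
Proof. by move=> hQ; rewrite trmx_mul mulmxA -(mulmxA A) hQ mulmx1. Qed.

Lemma gram_reflect_row m n (A B : 'M[R]_(m, n)) (k : 'I_m) :
  A *m A^T = B *m B^T -> (forall i : 'I_m, (i < k)%N -> row i B = row i A) ->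
  exists2 H : 'M[R]_n, H *m H^T = 1%:M &
    forall i : 'I_m, (i <= k)%N -> row i (B *m H) = row i A.
Proof.
move=> AB agree; exists (reflectmx (row k A - row k B)); first exact: reflectmx_orth.
have gram i j : dot (row i A) (row j A) = dot (row i B) (row j B).
  by rewrite -!dot_row AB.
move=> i; rewrite leq_eqVlt row_mul => /orP[/eqP/val_inj ->|ik].
  by apply: reflectmx_swap; rewrite gram.
by rewrite (agree i ik) reflectmx_fix // dotBr gram -(agree i ik) subrr.
Qed.

Lemma gram_orthogonal m n (A B : 'M[R]_(m, n)) :
  A *m A^T = B *m B^T -> exists2 Q : 'M[R]_n, Q *m Q^T = 1%:M & A = B *m Q.
Proof.
move=> AB.
suff /(_ m (leqnn m)) [Q hQ agree] : forall k, (k <= m)%N ->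
    exists2 Q : 'M[R]_n, Q *m Q^T = 1%:M &
      forall i : 'I_m, (i < k)%N -> row i (B *m Q) = row i A.
  by exists Q => //; apply/row_matrixP => i; rewrite agree.
elim=> [|k IH] km; first by exists 1%:M; rewrite ?trmx1 ?mulmx1.
have [Q hQ agree] := IH (ltnW km).
have AB' : A *m A^T = (B *m Q) *m (B *m Q)^T by rewrite gram_mulmx_orth.
have [H hH agreeH] := gram_reflect_row (k := Ordinal km) AB' agree.
by exists (Q *m H) => [|i ik]; rewrite ?gram_mulmx_orth // mulmxA agreeH.
Qed.

Lemma gram_factor m n (G : 'M[R]_(m, n)) (L : 'M[R]_m) : (m <= n)%N ->
  G *m G^T = L *m L^T -> exists2 U : 'M[R]_(m, n), U *m U^T = 1%:M & G = L *m U.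
Proof.
move=> mn GL.
have hP : (pid_mx m : 'M[R]_(m, n)) *m (pid_mx m)^T = 1%:M.
  by rewrite tr_pid_mx pid_mx_id // pid_mx_1.
have [Q hQ ->] := gram_orthogonal (etrans GL (esym (gram_mulmx_orth L hP))).
by exists (pid_mx m *m Q); rewrite ?gram_mulmx_orth // mulmxA.
Qed.

End Reflection.

Section Expectation.
Variables (R : rcfType) (T : Type) (E : (T -> R) -> R).
Hypothesis E_add : forall g h : T -> R, E (fun x => g x + h x) = E g + E h.
Hypothesis E_scale : forall (c : R) (g : T -> R), E (fun x => c * g x) = c * E g.

Lemma eq_E (g h : T -> R) : g =1 h -> E g = E h.
Proof. by move=> /functional_extensionality ->. Qed.

Lemma E0 : E (fun _ => 0) = 0.
Proof. by have := E_scale 0 (fun _ => 0); rewrite !mul0r. Qed.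

Lemma E_sum m (g : 'I_m -> T -> R) :
  E (fun x => \sum_(k < m) g k x) = \sum_(k < m) E (g k).
Proof.
elim: m g => [|m IH] g.
  by rewrite big_ord0 -[RHS]E0; apply: eq_E => x; rewrite big_ord0.
rewrite big_ord_recr /= -IH -E_add.
by apply: eq_E => x; rewrite big_ord_recr.
Qed.

Lemma Emx_mull a b c (A : 'M[R]_(a, b)) (M : T -> 'M[R]_(b, c)) :
  Emx E (fun x => A *m M x) = A *m Emx E M.
Proof.
apply/matrixP => i j; rewrite !mxE.
under eq_bigr do rewrite mxE -E_scale.
by rewrite -E_sum; apply: eq_E => x; rewrite mxE.
Qed.

Lemma Emx_tr a b (M : T -> 'M[R]_(a, b)) : Emx E (fun x => (M x)^T) = (Emx E M)^T.
Proof. by apply/matrixP => i j; rewrite !mxE; apply: eq_E => x; rewrite mxE. Qed.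

Lemma Emx_mulr a b c (A : 'M[R]_(b, c)) (M : T -> 'M[R]_(a, b)) :
  Emx E (fun x => M x *m A) = Emx E M *m A.
Proof.
apply: trmx_inj; rewrite -Emx_tr trmx_mul -Emx_tr -Emx_mull.
by congr Emx; apply: functional_extensionality => x; rewrite trmx_mul.
Qed.

End Expectation.

Section PolynomialChaos.
Variables (R : rcfType) (T : Type) (E : (T -> R) -> R).
Hypothesis E_add : forall g h : T -> R, E (fun x => g x + h x) = E g + E h.
Hypothesis E_scale : forall (c : R) (g : T -> R), E (fun x => c * g x) = c * E g.
Hypothesis E_one : E (fun _ => 1) = 1.
Variables (N : nat) (phi : 'I_N.+1 -> T -> R).
Hypothesis phi0 : forall x, phi ord0 x = 1.
Hypothesis phi_orth : forall i j : 'I_N.+1, i != j -> E (fun x => phi i x * phi j x) = 0.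
Hypothesis phi_pos : forall i : 'I_N.+1, 0 < E (fun x => phi i x ^+ 2).

Local Notation w i := (E (fun x => phi (lift ord0 i) x ^+ 2)).

Definition W1mx : 'M[R]_N := diag_mx (\row_i w i).
Definition W1sqrt : 'M[R]_N := diag_mx (\row_i Num.sqrt (w i)).

Lemma E_phi i : E (phi i) = (i == ord0)%:R.
Proof.
have [->|i0] := eqVneq i ord0; first by rewrite -E_one; apply: eq_E => x.
transitivity (E (fun x => phi i x * phi ord0 x)); last exact: phi_orth.
by apply: eq_E => x; rewrite phi0 mulr1.
Qed.

Lemma E_phi_phi i j :
  E (fun x => phi i x * phi j x) = (i == j)%:R * E (fun x => phi i x ^+ 2).
Proof.
have [<-|ij] := eqVneq i j; last by rewrite phi_orth // mul0r.
by rewrite mul1r; apply: eq_E => x; rewrite expr2.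
Qed.

Lemma Emx_PhiV : Emx E (PhiV phi) = col_mx (1%:M : 'M_1) 0.
Proof.
apply/matrixP => i j; rewrite mxE (_ : E _ = E (phi i)); last by apply: eq_E => x; rewrite mxE.
rewrite E_phi ord1 -[i](@splitK 1 N).
by case: split => k; rewrite mxE unsplitK /= !mxE ?ord1.
Qed.

Lemma Wmx_diag : Wmx E phi = diag_mx (\row_i E (fun x => phi i x ^+ 2)).
Proof.
apply/matrixP => i j; rewrite !mxE -mulr_natl -E_phi_phi.
by apply: eq_E => x; rewrite !mxE big_ord1 !mxE.
Qed.

Lemma Wmx_block : Wmx E phi = block_mx (1%:M : 'M_1) 0 0 W1mx.
Proof.
rewrite Wmx_diag /W1mx -diag_const_mx -diag_mx_row; congr diag_mx.
apply/rowP => i; rewrite -[i](@splitK 1 N).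
case: split => k; rewrite !mxE unsplitK /= ?mxE.
  have -> : lshift N k = ord0 by apply: val_inj; rewrite /= ord1.
  by rewrite -E_one; apply: eq_E => x; rewrite phi0 expr1n.
by have -> : rshift 1 k = lift ord0 k by apply: val_inj.
Qed.

Lemma Emx_mean_row_mx n (a : 'cV[R]_n) (X : 'M[R]_(n, N)) :
  Emx E (fun x => row_mx a X *m PhiV phi x) = a.
Proof. by rewrite Emx_mull // Emx_PhiV mul_row_col mulmx1 mulmx0 addr0. Qed.

Lemma Emx_second_moment n (F : 'M[R]_(n, N.+1)) :
  Emx E (fun x => (F *m PhiV phi x) *m (F *m PhiV phi x)^T) = F *m Wmx E phi *m F^T.
Proof.
rewrite -Emx_mull // -Emx_mulr //; congr Emx.
by apply: functional_extensionality => x; rewrite trmx_mul !mulmxA.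
Qed.

Lemma Wmx_form_row_mx n (a : 'cV[R]_n) (X : 'M[R]_(n, N)) :
  row_mx a X *m Wmx E phi *m (row_mx a X)^T = a *m a^T + X *m W1mx *m X^T.
Proof.
rewrite Wmx_block tr_row_mx.
(* the block lemmas are stated in dimension 1 + N, not syntactically N.+1 *)
change (@mulmx R n (1 + N) n
  (@mulmx R n (1 + N) (1 + N) (row_mx a X) (block_mx 1%:M 0 0 W1mx))
  (col_mx a^T X^T) = a *m a^T + X *m W1mx *m X^T).
by rewrite mul_row_block !mulmx0 addr0 add0r mulmx1 mul_row_col.
Qed.

Lemma sqrt_w_gt0 i : 0 < Num.sqrt (w i).
Proof. by rewrite sqrtr_gt0. Qed.

Lemma W1sqrt_gram : W1sqrt *m W1sqrt^T = W1mx.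
Proof.
rewrite tr_diag_mx mulmx_diag; congr diag_mx; apply/rowP => i.
by rewrite !mxE -expr2 sqr_sqrtr // ltW.
Qed.

Lemma W1sqrtK : W1sqrt *m W1isqrt E phi = 1%:M.
Proof.
rewrite mulmx_diag -diag_const_mx; congr diag_mx; apply/rowP => i.
by rewrite !mxE divff // gt_eqF // sqrt_w_gt0.
Qed.

Lemma W1isqrt_whitens : W1isqrt E phi *m W1mx *m (W1isqrt E phi)^T = 1%:M.
Proof.
rewrite tr_diag_mx !mulmx_diag -diag_const_mx; congr diag_mx; apply/rowP => i.
rewrite !mxE -{2}[w i](@sqr_sqrtr R) ?ltW //.
by have := lt0r_neq0 (sqrt_w_gt0 i); move=> s0; field.
Qed.

Lemma PCcoef_second_moment n (Ef : 'cV[R]_n) (L : 'M[R]_n) (U : 'M[R]_(n, N)) :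
  U *m U^T = 1%:M -> let F := PCcoef Ef L U (W1isqrt E phi) in
  F *m Wmx E phi *m F^T = Ef *m Ef^T + L *m L^T.
Proof.
move=> hU /=; rewrite Wmx_form_row_mx; congr (_ + _).
rewrite !trmx_mul !mulmxA -(mulmxA (L *m U)) -(mulmxA (L *m U)) W1isqrt_whitens.
by rewrite mulmx1 -(mulmxA L) hU mulmx1.
Qed.

Lemma PCcoef_of_moments n (Ef : 'cV[R]_n) (L : 'M[R]_n) (F : 'M[R]_(n, N.+1)) :
  (n <= N)%N -> Emx E (fun x => F *m PhiV phi x) = Ef ->
  F *m Wmx E phi *m F^T = Ef *m Ef^T + L *m L^T ->
  exists2 U : 'M[R]_(n, N), U *m U^T = 1%:M & F = PCcoef Ef L U (W1isqrt E phi).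
Proof.
rewrite -(hsubmxK (F : 'M[R]_(n, 1 + N))); move: (lsubmx _) (rsubmx _) => F0 F1.
rewrite Emx_mean_row_mx Wmx_form_row_mx => nN <- /addrI hF1.
have [U hU F1W] : exists2 U : 'M[R]_(n, N), U *m U^T = 1%:M & F1 *m W1sqrt = L *m U.
  by apply: gram_factor; rewrite // -hF1 -W1sqrt_gram trmx_mul !mulmxA.
by exists U; rewrite // /PCcoef -F1W -mulmxA W1sqrtK mulmx1.
Qed.

End PolynomialChaos.

Theorem theorem1 (R : rcfType) (T : Type) (E : (T -> R) -> R)
  (E_add : forall g h : T -> R, E (fun x => g x + h x) = E g + E h)
  (E_scale : forall (c : R) (g : T -> R), E (fun x => c * g x) = c * E g)
  (E_one : E (fun _ => 1) = 1)
  (n N : nat) (phi : 'I_N.+1 -> T -> R)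
  (phi0 : forall x, phi ord0 x = 1)
  (phi_orth : forall i j : 'I_N.+1, i != j -> E (fun x => phi i x * phi j x) = 0)
  (phi_pos : forall i : 'I_N.+1, 0 < E (fun x => phi i x ^+ 2))
  (f : 'I_n -> T -> R) (L : 'M[R]_n)
  (hL : L *m L^T = Emx E (fun x => fV f x *m (fV f x)^T)
                   - Emx E (fV f) *m (Emx E (fV f))^T)
  (hNn : (n <= N)%N) :
  (forall U : 'M[R]_(n, N), U *m U^T = 1%:M ->
     let F := PCcoef (Emx E (fV f)) L U (W1isqrt E phi) in
     Emx E (fun x => F *m PhiV phi x) = Emx E (fV f) /\
     Emx E (fun x => (F *m PhiV phi x) *m (F *m PhiV phi x)^T)
       = F *m Wmx E phi *m F^T /\
     F *m Wmx E phi *m F^T = Emx E (fun x => fV f x *m (fV f x)^T)) /\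
  (forall F : 'M[R]_(n, N.+1),
     Emx E (fun x => F *m PhiV phi x) = Emx E (fV f) ->
     Emx E (fun x => (F *m PhiV phi x) *m (F *m PhiV phi x)^T)
       = Emx E (fun x => fV f x *m (fV f x)^T) ->
     exists U : 'M[R]_(n, N), U *m U^T = 1%:M /\
       F = PCcoef (Emx E (fV f)) L U (W1isqrt E phi)).
Proof.
have second_moment := Emx_second_moment E_add E_scale phi.
have ff : Emx E (fun x => fV f x *m (fV f x)^T)
          = Emx E (fV f) *m (Emx E (fV f))^T + L *m L^T.
  by rewrite hL addrC subrK.
split=> [U hU F | F mean second].
  split; first exact: Emx_mean_row_mx.
  by rewrite second_moment ff PCcoef_second_moment.
rewrite second_moment ff in second.
have [U hU ->] := PCcoef_of_moments E_add E_scale E_one phi0 phi_orth phi_pos hNn mean second.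
by exists U.
Qed.
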